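(* Let $\mathcal{F}[0,1]$ be a Banach algebra (over $\mathbb{F}\in\{\mathbb{R},\mathbb{C}\}$, with pointwise operations, norm $\|\cdot\|_{\mathcal F}$) of functions $[0,1]\to\mathbb{F}$ that is continuously embedded into $B[0,1]$. Suppose $\mathcal{F}[0,1]$ satisfies the symmetry property, the inverse closedness property and the selection principle. Then the multiplication in $\mathcal{F}[0,1]$ is locally open at every pair of jointly nondegenerate functions $(F,G)\in(\mathcal{F}[0,1])^2$; i.e. for every $\varepsilon>0$ there is $\delta>0$ such that every $u\in\mathcal F[0,1]$ with $\|u-FG\|_{\mathcal F}<\delta$ can be written as $u=fg$ with $f,g\in\mathcal F[0,1]$, $\|f-F\|_{\mathcal F}<\varepsilon$, $\|g-G\|_{\mathcal F}<\varepsilon$.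
   Context: $B[0,1]$ denotes the Banach algebra of all bounded functions $f:[0,1]\to\mathbb{F}$ with norm $\|f\|_\infty=\sup_{x\in[0,1]}|f(x)|$. Functions $f,g\in B[0,1]$ are jointly nondegenerate if $\inf_{x\in[0,1]}(|f(x)|+|g(x)|)>0$. $\mathcal F[0,1]$ has the symmetry property if for every $f\in\mathcal F[0,1]$ its complex conjugate $\overline f\in\mathcal F[0,1]$ and $\|\overline f\|_{\mathcal F}=\|f\|_{\mathcal F}$. It has the inverse closedness property if for every $f\in\mathcal F[0,1]$ with $\inf_{x\in[0,1]}|f(x)|>0$ one has $1/f\in\mathcal F[0,1]$ and $\|1/f\|_{\mathcal F}\le(\inf_{x\in[0,1]}|f(x)|)^{-2}\|f\|_{\mathcal F}$. It satisfies the selection principle if every sequence $(f_n)$ with $\sup_n\|f_n\|_{\mathcal F}<\infty$ has a subsequence converging pointwise on $[0,1]$ to some $f\in\mathcal F[0,1]$. Multiplication is locally open at $(a,b)$ if for every $\varepsilon>0$ there is $\delta>0$ with $B(ab,\delta)\subset B(a,\varepsilon)\cdot B(b,\varepsilon)$, where $B(a,r)$ is the open ball of radius $r$ about $a$ and $X\cdot Y=\{xy: x\in X, y\in Y\}$. *)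

From Stdlib Require Import Reals Lra.
Open Scope R_scope.

Inductive sfield := RealF | ComplexF.

(* Complex numbers as pairs (re, im). *)
Definition Cplx : Type := (R * R)%type.
Definition Cadd (z w : Cplx) : Cplx := (fst z + fst w, snd z + snd w).
Definition Cmul (z w : Cplx) : Cplx :=
  (fst z * fst w - snd z * snd w, fst z * snd w + snd z * fst w).
Definition Copp (z : Cplx) : Cplx := (- fst z, - snd z).
Definition Cinv (z : Cplx) : Cplx :=
  let d := fst z * fst z + snd z * snd z in (fst z / d, - snd z / d).
Definition Cabs (z : Cplx) : R := sqrt (fst z * fst z + snd z * snd z).
Definition Cconj (z : Cplx) : Cplx := (fst z, - snd z).

Definition K (s : sfield) : Type :=
  match s with RealF => R | ComplexF => Cplx end.

Definition K0 (s : sfield) : K s :=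
  match s return K s with RealF => 0 | ComplexF => (0, 0) end.
Definition Kadd (s : sfield) : K s -> K s -> K s :=
  match s return K s -> K s -> K s with RealF => Rplus | ComplexF => Cadd end.
Definition Kmul (s : sfield) : K s -> K s -> K s :=
  match s return K s -> K s -> K s with RealF => Rmult | ComplexF => Cmul end.
Definition Kopp (s : sfield) : K s -> K s :=
  match s return K s -> K s with RealF => Ropp | ComplexF => Copp end.
Definition Kinv (s : sfield) : K s -> K s :=
  match s return K s -> K s with RealF => Rinv | ComplexF => Cinv end.
Definition Kabs (s : sfield) : K s -> R :=
  match s return K s -> R with RealF => Rabs | ComplexF => Cabs end.
Definition Kconj (s : sfield) : K s -> K s :=
  match s return K s -> K s with RealF => (fun x => x) | ComplexF => Cconj end.

Definition I01 : Type := { x : R | 0 <= x <= 1 }.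
Definition fn (s : sfield) : Type := I01 -> K s.

Definition fzero s : fn s := fun _ => K0 s.
Definition fadd s (f g : fn s) : fn s := fun x => Kadd s (f x) (g x).
Definition fsub s (f g : fn s) : fn s := fun x => Kadd s (f x) (Kopp s (g x)).
Definition fmul s (f g : fn s) : fn s := fun x => Kmul s (f x) (g x).
Definition fscal s (c : K s) (f : fn s) : fn s := fun x => Kmul s c (f x).
Definition finv s (f : fn s) : fn s := fun x => Kinv s (f x).
Definition fconj s (f : fn s) : fn s := fun x => Kconj s (f x).

Definition is_banach_function_algebra (s : sfield)
    (A : fn s -> Prop) (N : fn s -> R) : Prop :=
  A (fzero s) /\
  (forall f g, A f -> A g -> A (fadd s f g)) /\
  (forall c f, A f -> A (fscal s c f)) /\
  (forall f g, A f -> A g -> A (fmul s f g)) /\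
  (forall f, A f -> 0 <= N f) /\
  (forall f, A f -> N f = 0 -> f = fzero s) /\
  (forall c f, A f -> N (fscal s c f) = Kabs s c * N f) /\
  (forall f g, A f -> A g -> N (fadd s f g) <= N f + N g) /\
  (forall f g, A f -> A g -> N (fmul s f g) <= N f * N g) /\
  (forall u : nat -> fn s, (forall n, A (u n)) ->
     (forall eps, eps > 0 -> exists n0, forall n m, (n >= n0)%nat -> (m >= n0)%nat ->
        N (fsub s (u n) (u m)) < eps) ->
     exists f, A f /\ forall eps, eps > 0 -> exists n0, forall n, (n >= n0)%nat ->
        N (fsub s (u n) f) < eps).

Definition continuously_embedded_in_B (s : sfield) (A : fn s -> Prop) (N : fn s -> R) : Prop :=
  exists C, 0 <= C /\ forall f, A f -> forall x, Kabs s (f x) <= C * N f.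

Definition symmetry_property (s : sfield) (A : fn s -> Prop) (N : fn s -> R) : Prop :=
  forall f, A f -> A (fconj s f) /\ N (fconj s f) = N f.

(* inf_x |f x| > 0 with the bound ||1/f|| <= (inf|f|)^(-2) ||f||.  Since inf|f| is
   itself a positive lower bound of |f| and is the largest one, quantifying over all
   positive lower bounds m of |f| is literally equivalent. *)
Definition inverse_closedness_property (s : sfield) (A : fn s -> Prop) (N : fn s -> R) : Prop :=
  forall f, A f -> forall m, 0 < m -> (forall x, m <= Kabs s (f x)) ->
    A (finv s f) /\ N (finv s f) <= / (m * m) * N f.

Definition pointwise_cv (s : sfield) (u : nat -> fn s) (f : fn s) : Prop :=
  forall x eps, eps > 0 -> exists n0, forall n, (n >= n0)%nat ->
    Kabs s (Kadd s (u n x) (Kopp s (f x))) < eps.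

Definition selection_principle (s : sfield) (A : fn s -> Prop) (N : fn s -> R) : Prop :=
  forall u : nat -> fn s, (forall n, A (u n)) -> (exists M, forall n, N (u n) <= M) ->
    exists (phi : nat -> nat) (f : fn s),
      (forall n, (phi n < phi (S n))%nat) /\ A f /\ pointwise_cv s (fun n => u (phi n)) f.

Definition jointly_nondegenerate (s : sfield) (f g : fn s) : Prop :=
  exists m, 0 < m /\ forall x, m <= Kabs s (f x) + Kabs s (g x).

Definition mult_locally_open_at (s : sfield) (A : fn s -> Prop) (N : fn s -> R)
    (F G : fn s) : Prop :=
  forall eps, eps > 0 -> exists delta, delta > 0 /\
    forall u, A u -> N (fsub s u (fmul s F G)) < delta ->
      exists f g, A f /\ A g /\ N (fsub s f F) < eps /\ N (fsub s g G) < eps /\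
                  u = fmul s f g.

(* If [F a + G b = 1] with [a, b] in the algebra, then [(F + t b) (G + t a) = F G + t + a b t^2],
   so it suffices to solve [t = w - a b t^2] for a small perturbation [w = u - F G]; for small
   [w] the right-hand side is a contraction of a small ball, and the Banach fixed-point theorem
   gives [t] of norm [O(||w||)].  For jointly nondegenerate [F, G] one may take
   [a = conj F / D] and [b = conj G / D] with [D = |F|^2 + |G|^2 >= m^2 / 2], using symmetry and
   inverse closedness. *)

From Stdlib Require Import Reals Lra Lia Psatz FunctionalExtensionality.
Open Scope R_scope.

Definition K1 (s : sfield) : K s :=
  match s return K s with RealF => 1 | ComplexF => (1, 0) end.

Ltac K_ring s :=
  destruct s; cbn [K Kadd Kmul Kopp Kconj K0 K1] in *;
  [ring | unfold Cadd, Cmul, Copp, Cconj; apply injective_projections; cbn [fst snd]; ring].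

Lemma Kabs_ge0 s (a : K s) : 0 <= Kabs s a.
Proof. destruct s; [apply Rabs_pos | apply sqrt_pos]. Qed.

Lemma Kabs_K0 s : Kabs s (K0 s) = 0.
Proof.
  destruct s; cbn.
  - apply Rabs_R0.
  - unfold Cabs; cbn. replace (0 * 0 + 0 * 0) with 0 by ring. apply sqrt_0.
Qed.

Lemma Kabs_opp_K1 s : Kabs s (Kopp s (K1 s)) = 1.
Proof.
  destruct s; cbn.
  - rewrite Rabs_Ropp. apply Rabs_R1.
  - unfold Cabs; cbn. replace (- (1) * - (1) + - 0 * - 0) with 1 by ring. apply sqrt_1.
Qed.

Lemma Kmul_Kinv_l s (d : K s) : 0 < Kabs s d -> Kmul s (Kinv s d) d = K1 s.
Proof.
  destruct s; cbn; intro Hd.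
  - apply Rinv_l. intros ->. rewrite Rabs_R0 in Hd. lra.
  - destruct d as [a b]; unfold Cabs, Cinv, Cmul in *; cbn in *.
    assert (Hnz : a * a + b * b <> 0) by (intros E; rewrite E, sqrt_0 in Hd; lra).
    apply injective_projections; cbn; field; exact Hnz.
Qed.

Lemma Kadd_opp_eq0 s (a b : K s) : Kadd s a (Kopp s b) = K0 s -> a = b.
Proof.
  destruct s; cbn; intro H.
  - lra.
  - destruct a, b; unfold Cadd, Copp in H; cbn in H. injection H; intros; f_equal; lra.
Qed.

Lemma Kabs_sum_mul_conj s (a b : K s) :
  Kabs s (Kadd s (Kmul s a (Kconj s a)) (Kmul s b (Kconj s b))) = Kabs s a ^ 2 + Kabs s b ^ 2.
Proof.
  destruct s; cbn.
  - rewrite !Rmult_1_r, <- !Rabs_mult, !Rabs_pos_eq by nra. ring.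
  - destruct a as [a1 a2], b as [b1 b2]; unfold Cabs, Cmul, Cadd, Cconj; cbn.
    set (n := a1 * a1 + a2 * a2 + (b1 * b1 + b2 * b2)).
    replace (_ * _ + _ * _) with (n * n) by (unfold n; ring).
    rewrite sqrt_square by (unfold n; nra).
    rewrite !Rmult_1_r, !sqrt_sqrt by nra. unfold n; ring.
Qed.

Lemma Kabs_sum_mul_conj_ge s (a b : K s) m :
  0 < m -> m <= Kabs s a + Kabs s b ->
  m * m / 2 <= Kabs s (Kadd s (Kmul s a (Kconj s a)) (Kmul s b (Kconj s b))).
Proof.
  intros Hm Hab. rewrite Kabs_sum_mul_conj.
  pose proof (Kabs_ge0 s a). pose proof (Kabs_ge0 s b).
  pose proof (pow2_ge_0 (Kabs s a - Kabs s b)). nra.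
Qed.

Lemma factor_of_quadratic_root s (f g a b u t : K s) :
  Kadd s (Kmul s f a) (Kmul s g b) = K1 s ->
  t = Kadd s (Kadd s u (Kopp s (Kmul s f g))) (Kopp s (Kmul s (Kmul s a b) (Kmul s t t))) ->
  u = Kmul s (Kadd s f (Kmul s t b)) (Kadd s g (Kmul s t a)).
Proof.
  intros Hunit Ht.
  transitivity (Kadd s (Kadd s (Kmul s f g) (Kmul s t (Kadd s (Kmul s f a) (Kmul s g b))))
                       (Kmul s (Kmul s a b) (Kmul s t t))); [|K_ring s].
  rewrite Hunit, Ht at 1. K_ring s.
Qed.

Lemma fn_ext s (f g : fn s) : (forall x, f x = g x) -> f = g.
Proof. intros; apply functional_extensionality; auto. Qed.

Lemma fsub_fadd_fscal s (f g : fn s) : fsub s f g = fadd s f (fscal s (Kopp s (K1 s)) g).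
Proof. apply fn_ext; intro x; unfold fsub, fadd, fscal. K_ring s. Qed.

Section BanachFunctionAlgebra.

Variables (s : sfield) (A : fn s -> Prop) (N : fn s -> R).
Hypothesis HB : is_banach_function_algebra s A N.

Lemma A_zero : A (fzero s).
Proof. destruct HB as (H & _); apply H. Qed.

Lemma A_add f g : A f -> A g -> A (fadd s f g).
Proof. destruct HB as (_ & H & _); apply H. Qed.

Lemma A_scal c f : A f -> A (fscal s c f).
Proof. destruct HB as (_ & _ & H & _); apply H. Qed.

Lemma A_mul f g : A f -> A g -> A (fmul s f g).
Proof. destruct HB as (_ & _ & _ & H & _); apply H. Qed.

Lemma A_sub f g : A f -> A g -> A (fsub s f g).
Proof. intros; rewrite fsub_fadd_fscal; auto using A_add, A_scal. Qed.

Lemma N_ge0 f : A f -> 0 <= N f.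
Proof. destruct HB as (_ & _ & _ & _ & H & _); apply H. Qed.

Lemma N_eq0 f : A f -> N f = 0 -> f = fzero s.
Proof. destruct HB as (_ & _ & _ & _ & _ & H & _); apply H. Qed.

Lemma N_scal c f : A f -> N (fscal s c f) = Kabs s c * N f.
Proof. destruct HB as (_ & _ & _ & _ & _ & _ & H & _); apply H. Qed.

Lemma N_add f g : A f -> A g -> N (fadd s f g) <= N f + N g.
Proof. destruct HB as (_ & _ & _ & _ & _ & _ & _ & H & _); apply H. Qed.

Lemma N_mul f g : A f -> A g -> N (fmul s f g) <= N f * N g.
Proof. destruct HB as (_ & _ & _ & _ & _ & _ & _ & _ & H & _); apply H. Qed.

Lemma N_zero : N (fzero s) = 0.
Proof.
  replace (fzero s) with (fscal s (K0 s) (fzero s)).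
  - rewrite N_scal, Kabs_K0 by apply A_zero. ring.
  - apply fn_ext; intro x; unfold fscal, fzero. K_ring s.
Qed.

Lemma N_sub_le f g : A f -> A g -> N (fsub s f g) <= N f + N g.
Proof.
  intros Af Ag. rewrite fsub_fadd_fscal.
  eapply Rle_trans; [apply N_add; auto using A_scal|].
  rewrite N_scal, Kabs_opp_K1 by auto. lra.
Qed.

Lemma N_sub_comm f g : A f -> A g -> N (fsub s f g) = N (fsub s g f).
Proof.
  intros Af Ag.
  replace (fsub s g f) with (fscal s (Kopp s (K1 s)) (fsub s f g)).
  - rewrite N_scal, Kabs_opp_K1 by auto using A_sub. ring.
  - apply fn_ext; intro x; unfold fscal, fsub. K_ring s.
Qed.

Lemma N_sub_triangle f g h : A f -> A g -> A h ->
  N (fsub s f h) <= N (fsub s f g) + N (fsub s g h).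
Proof.
  intros. replace (fsub s f h) with (fadd s (fsub s f g) (fsub s g h)).
  - apply N_add; auto using A_sub.
  - apply fn_ext; intro x; unfold fadd, fsub. K_ring s.
Qed.

Lemma N_le_sub_add f g : A f -> A g -> N f <= N (fsub s f g) + N g.
Proof.
  intros. replace f with (fadd s (fsub s f g) g) at 1.
  - apply N_add; auto using A_sub.
  - apply fn_ext; intro x; unfold fadd, fsub. K_ring s.
Qed.

Lemma N_sub_eq0 f g : A f -> A g -> N (fsub s f g) = 0 -> f = g.
Proof.
  intros Af Ag H. apply N_eq0 in H; auto using A_sub.
  apply fn_ext; intro x. apply Kadd_opp_eq0.
  change (fsub s f g x = fzero s x). now rewrite H.
Qed.

Definition N_converges_to (u : nat -> fn s) (f : fn s) : Prop :=
  forall eps, eps > 0 -> exists n0, forall n, (n >= n0)%nat -> N (fsub s (u n) f) < eps.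

Lemma N_complete u : (forall n, A (u n)) ->
  (forall eps, eps > 0 -> exists n0, forall n m, (n >= n0)%nat -> (m >= n0)%nat ->
     N (fsub s (u n) (u m)) < eps) ->
  exists f, A f /\ N_converges_to u f.
Proof. destruct HB as (_ & _ & _ & _ & _ & _ & _ & _ & _ & H); apply H. Qed.

Lemma N_le_of_converges u f r : (forall n, A (u n) /\ N (u n) <= r) -> A f ->
  N_converges_to u f -> N f <= r.
Proof.
  intros Hu Af Hcv. apply Rle_plus_epsilon; intros eps Heps.
  destruct (Hcv eps Heps) as [n0 Hn0]. specialize (Hn0 n0 (le_n _)).
  destruct (Hu n0) as [Aun Nun].
  rewrite N_sub_comm in Hn0 by auto.
  pose proof (N_le_sub_add f (u n0) Af Aun). lra.
Qed.

Section Contraction.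

Variables (Phi : fn s -> fn s) (r q : R).
Hypothesis r_ge0 : 0 <= r.
Hypothesis q_ge0_lt1 : 0 <= q < 1.
Hypothesis Phi_ball : forall t, A t -> N t <= r -> A (Phi t) /\ N (Phi t) <= r.
Hypothesis Phi_lipschitz : forall t t', A t -> A t' -> N t <= r -> N t' <= r ->
  N (fsub s (Phi t) (Phi t')) <= q * N (fsub s t t').

Let iterate n := Nat.iter n Phi (fzero s).
Let step0 := N (fsub s (iterate 1) (iterate 0)).

Lemma iterate_in_ball n : A (iterate n) /\ N (iterate n) <= r.
Proof.
  induction n as [|n IH].
  - change (iterate 0) with (fzero s). split; [apply A_zero | rewrite N_zero; exact r_ge0].
  - apply Phi_ball; apply IH.
Qed.

Lemma iterate_step_le n : N (fsub s (iterate (S n)) (iterate n)) <= q ^ n * step0.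
Proof.
  induction n as [|n IH]; [rewrite pow_O, Rmult_1_l; apply Rle_refl|].
  change (iterate (S (S n))) with (Phi (iterate (S n))).
  change (iterate (S n)) with (Phi (iterate n)) at 2.
  eapply Rle_trans; [apply Phi_lipschitz; apply iterate_in_ball|].
  cbn [pow]. rewrite Rmult_assoc. apply Rmult_le_compat_l; [lra | exact IH].
Qed.

Lemma iterate_sub_le n k :
  (1 - q) * N (fsub s (iterate (n + k)) (iterate n)) <= step0 * (q ^ n - q ^ (n + k)).
Proof.
  induction k as [|k IH].
  - rewrite Nat.add_0_r. replace (fsub s (iterate n) (iterate n)) with (fzero s).
    + rewrite N_zero. lra.
    + apply fn_ext; intro x; unfold fsub, fzero. K_ring s.
  - rewrite Nat.add_succ_r.
    pose proof (N_sub_triangle (iterate (S (n + k))) (iterate (n + k)) (iterate n)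
      (proj1 (iterate_in_ball _)) (proj1 (iterate_in_ball _)) (proj1 (iterate_in_ball _)))
      as Htri.
    pose proof (iterate_step_le (n + k)) as Hstep.
    cbn [pow]. nra.
Qed.

Lemma iterate_cauchy eps : eps > 0 -> exists n0, forall n m, (n >= n0)%nat -> (m >= n0)%nat ->
  N (fsub s (iterate n) (iterate m)) < eps.
Proof.
  intros Heps.
  assert (Hstep0 : 0 <= step0) by (apply N_ge0, A_sub; apply iterate_in_ball).
  destruct (pow_lt_1_zero q ltac:(rewrite Rabs_pos_eq; lra) (eps * (1 - q) / (step0 + 1)))
    as [n0 Hn0]; [apply Rdiv_lt_0_compat; nra|].
  assert (Htail : forall a k, (a >= n0)%nat -> N (fsub s (iterate (a + k)) (iterate a)) < eps).
  { intros a k Ha. specialize (Hn0 a Ha).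
    rewrite Rabs_pos_eq in Hn0 by (apply pow_le; lra).
    apply (Rmult_lt_compat_r (step0 + 1)) in Hn0; [|lra].
    unfold Rdiv in Hn0. rewrite Rmult_assoc, Rinv_l, Rmult_1_r in Hn0 by lra.
    pose proof (iterate_sub_le a k).
    pose proof (pow_le q (a + k) (proj1 q_ge0_lt1)).
    pose proof (pow_le q a (proj1 q_ge0_lt1)).
    nra. }
  exists n0. intros n m Hn Hm.
  destruct (Nat.le_ge_cases n m) as [Hle|Hle].
  - replace m with (n + (m - n))%nat by lia.
    rewrite N_sub_comm by apply iterate_in_ball. now apply Htail.
  - replace n with (m + (n - m))%nat by lia. now apply Htail.
Qed.

Lemma contraction_fixpoint : exists t, A t /\ N t <= r /\ Phi t = t.
Proof.
  destruct (N_complete iterate (fun n => proj1 (iterate_in_ball n)) iterate_cauchy)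
    as [t [At Hcv]].
  assert (Ntr : N t <= r) by exact (N_le_of_converges iterate t r iterate_in_ball At Hcv).
  destruct (Phi_ball t At Ntr) as [APt NPt].
  exists t; split; [exact At | split; [exact Ntr|]].
  apply N_sub_eq0; auto.
  apply Rle_antisym; [|apply N_ge0, A_sub; auto].
  apply Rle_plus_epsilon; intros eps Heps.
  destruct (Hcv (eps / 2) ltac:(lra)) as [n0 Hn0].
  destruct (iterate_in_ball n0) as [Aun Nun].
  pose proof (N_sub_triangle (Phi t) (iterate (S n0)) t APt
    (proj1 (iterate_in_ball _)) At) as Htri.
  pose proof (Phi_lipschitz t (iterate n0) At Aun Ntr Nun) as Hlip.
  rewrite N_sub_comm with (f := t) in Hlip by auto.
  pose proof (Hn0 n0 (le_n _)). pose proof (Hn0 (S n0) (le_S _ _ (le_n _))).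
  pose proof (N_ge0 (fsub s (iterate n0) t) ltac:(auto using A_sub)).
  change (iterate (S n0)) with (Phi (iterate n0)) in Htri at 1.
  nra.
Qed.

End Contraction.

Lemma quadratic_fixpoint P w r : A P -> A w -> 0 <= r -> 4 * N P * r <= 1 -> 2 * N w <= r ->
  exists t, A t /\ N t <= r /\ t = fsub s w (fmul s P (fmul s t t)).
Proof.
  intros AP Aw Hr HPr Hwr.
  pose proof (N_ge0 P AP) as NP0.
  destruct (contraction_fixpoint (fun t => fsub s w (fmul s P (fmul s t t))) r (/ 2))
    as [t [At [Ntr Hfix]]]; [lra | lra | | | exists t; auto].
  - intros t At Ntr. pose proof (N_ge0 t At).
    assert (Att : A (fmul s t t)) by auto using A_mul.
    split; [auto using A_sub, A_mul|].
    assert (APtt : A (fmul s P (fmul s t t))) by auto using A_mul.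
    pose proof (N_sub_le w _ Aw APtt).
    pose proof (N_mul P _ AP Att). pose proof (N_mul t t At At).
    assert (N P * N (fmul s t t) <= N P * (r * r)).
    { apply Rmult_le_compat_l; [lra|]. nra. }
    nra.
  - intros t t' At At' Ntr Ntr'.
    replace (fsub s (fsub s w (fmul s P (fmul s t t))) (fsub s w (fmul s P (fmul s t' t'))))
      with (fmul s P (fmul s (fsub s t' t) (fadd s t' t)))
      by (apply fn_ext; intro x; unfold fmul, fsub, fadd; K_ring s).
    rewrite (N_sub_comm t t') by auto.
    assert (Ad : A (fsub s t' t)) by auto using A_sub.
    assert (As : A (fadd s t' t)) by auto using A_add.
    pose proof (N_ge0 _ Ad). pose proof (N_ge0 _ As).
    assert (Ads : A (fmul s (fsub s t' t) (fadd s t' t))) by auto using A_mul.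
    pose proof (N_mul P _ AP Ads). pose proof (N_mul _ _ Ad As).
    pose proof (N_add t' t At' At).
    assert (N (fsub s t' t) * N (fadd s t' t) <= N (fsub s t' t) * (2 * r)).
    { apply Rmult_le_compat_l; lra. }
    assert (N P * N (fmul s (fsub s t' t) (fadd s t' t)) <= N P * (N (fsub s t' t) * (2 * r))).
    { apply Rmult_le_compat_l; lra. }
    nra.
Qed.

Lemma mult_locally_open_of_unit_ideal F G a b : A F -> A G -> A a -> A b ->
  (forall x, Kadd s (Kmul s (F x) (a x)) (Kmul s (G x) (b x)) = K1 s) ->
  mult_locally_open_at s A N F G.
Proof.
  intros AF AG Aa Ab Hunit eps Heps.
  set (P := fmul s a b).
  assert (AP : A P) by (apply A_mul; auto).
  pose proof (N_ge0 P AP). pose proof (N_ge0 a Aa). pose proof (N_ge0 b Ab).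
  set (r := Rmin (/ (4 * (N P + 1))) (eps / (2 * (N a + N b + 1)))).
  assert (Hr0 : 0 < r) by (apply Rmin_pos; [apply Rinv_0_lt_compat | apply Rdiv_lt_0_compat]; lra).
  assert (HPr : 4 * N P * r <= 1).
  { assert (r * (4 * (N P + 1)) <= 1); [|nra].
    apply (Rmult_le_reg_r (/ (4 * (N P + 1)))); [apply Rinv_0_lt_compat; lra|].
    rewrite Rmult_assoc, Rinv_r, Rmult_1_l, Rmult_1_r by lra. apply Rmin_l. }
  assert (Hrab : r * (N a + N b + 1) < eps).
  { assert (r * (2 * (N a + N b + 1)) <= eps); [|nra].
    apply (Rmult_le_reg_r (/ (2 * (N a + N b + 1)))); [apply Rinv_0_lt_compat; lra|].
    rewrite Rmult_assoc, Rinv_r, Rmult_1_r by lra. apply Rmin_r. }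
  exists (r / 2); split; [lra|].
  intros u Au Hu.
  set (w := fsub s u (fmul s F G)) in *.
  assert (Aw : A w). { apply A_sub; [exact Au | apply A_mul; assumption]. }
  destruct (quadratic_fixpoint P w r AP Aw ltac:(lra) HPr ltac:(lra)) as [t [At [Ntr Ht]]].
  pose proof (N_ge0 t At).
  exists (fadd s F (fmul s t b)), (fadd s G (fmul s t a)).
  repeat split; auto using A_add, A_mul.
  - replace (fsub s (fadd s F (fmul s t b)) F) with (fmul s t b)
      by (apply fn_ext; intro x; unfold fsub, fadd, fmul; K_ring s).
    pose proof (N_mul t b At Ab). nra.
  - replace (fsub s (fadd s G (fmul s t a)) G) with (fmul s t a)
      by (apply fn_ext; intro x; unfold fsub, fadd, fmul; K_ring s).
    pose proof (N_mul t a At Aa). nra.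
  - apply fn_ext; intro x. apply factor_of_quadratic_root; [apply Hunit|].
    exact (f_equal (fun h => h x) Ht).
Qed.

End BanachFunctionAlgebra.

Theorem theorem2p1 (s : sfield) (A : fn s -> Prop) (N : fn s -> R) :
  is_banach_function_algebra s A N ->
  continuously_embedded_in_B s A N ->
  symmetry_property s A N ->
  inverse_closedness_property s A N ->
  selection_principle s A N ->
  forall F G : fn s, A F -> A G -> jointly_nondegenerate s F G ->
    mult_locally_open_at s A N F G.
Proof.
  intros HB _ Hsym Hinv _ F G AF AG [m [Hm HFG]].
  destruct (Hsym F AF) as [AFc _]. destruct (Hsym G AG) as [AGc _].
  set (D := fadd s (fmul s F (fconj s F)) (fmul s G (fconj s G))).
  assert (AD : A D) by (apply (A_add s A N HB); apply (A_mul s A N HB); auto).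
  assert (HD : forall x, m * m / 2 <= Kabs s (D x))
    by (intro x; apply Kabs_sum_mul_conj_ge; auto).
  destruct (Hinv D AD (m * m / 2) ltac:(nra) HD) as [AE _].
  apply (mult_locally_open_of_unit_ideal s A N HB F G
           (fmul s (finv s D) (fconj s F)) (fmul s (finv s D) (fconj s G)));
    try apply (A_mul s A N HB); auto.
  intro x. pose proof (Kmul_Kinv_l s (D x) ltac:(specialize (HD x); nra)) as HED.
  unfold D, fadd, fmul, finv, fconj in *.
  rewrite <- HED. K_ring s.
Qed.
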